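(* Let $V$ be a vector space over a field $F$, let $T:V\to V$ (not necessarily linear) have a vanishing polynomial of degree $m$, and let $T_1:V\to V$ satisfy $T_1^l=T^k$ for integers $k\ge0$, $l\ge1$. Then $T_1$ has a vanishing polynomial of degree at most $ml$.
   Context: For $T:V\to V$ (not necessarily linear), $T^0=I$, $T^i=T\circ T^{i-1}$, and $p(T)(v)=\sum a_iT^i(v)$ for $p(x)=\sum a_ix^i$. A vanishing polynomial of $T$ is a nonzero $p\in F[x]$ with $p(T)(v)=0$ for all $v\in V$. *)

From HB Require Import structures.
From mathcomp Require Import all_boot all_order all_algebra.
Set Implicit Arguments. Unset Strict Implicit. Unset Printing Implicit Defensive.
Import GRing.Theory.
Local Open Scope ring_scope.

Definition poly_app (F : fieldType) (V : lmodType F) (p : {poly F}) (T : V -> V) (v : V) : V :=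
  \sum_(i < size p) p`_i *: iter i T v.

Definition vanishing_poly (F : fieldType) (V : lmodType F) (T : V -> V) (p : {poly F}) : Prop :=
  p != 0 /\ forall v : V, poly_app p T v = 0.

From HB Require Import structures.
From mathcomp Require Import all_boot all_order all_algebra.
Import GRing.Theory.
Set Implicit Arguments. Unset Strict Implicit. Unset Printing Implicit Defensive.
Local Open Scope ring_scope.

(* In F[x]/(p), a space of dimension deg p = m, the m + 1 powers of X^k are
   linearly dependent, so some nonzero Q of degree at most m has p | Q(X^k),
   hence Q(T^k) = 0.  As T1^l = T^k, the polynomial Q(X^l), of degree at most
   ml, vanishes at T1. *)

Section PolyApp.
Variables (F : fieldType) (V : lmodType F).
Implicit Types (p q : {poly F}) (T : V -> V) (v : V).

Lemma poly_app_widen p T v N :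
  (size p <= N)%N -> poly_app p T v = \sum_(i < N) p`_i *: iter i T v.
Proof.
move=> le_pN; rewrite /poly_app (big_ord_widen _ (fun i => p`_i *: iter i T v) le_pN).
rewrite big_mkcond /=; apply: eq_bigr => i _.
by case: ltnP => // le_p_i; rewrite nth_default // scale0r.
Qed.

Lemma poly_app0 T v : poly_app 0 T v = 0.
Proof. by rewrite /poly_app size_poly0 big_ord0. Qed.

Lemma poly_appD p q T v : poly_app (p + q) T v = poly_app p T v + poly_app q T v.
Proof.
rewrite !(@poly_app_widen _ _ _ (maxn (size p) (size q))) ?leq_maxl ?leq_maxr ?size_polyD //.
by rewrite -big_split; apply: eq_bigr => i _; rewrite coefD scalerDl.
Qed.

Lemma poly_appZ c p T v : poly_app (c *: p) T v = c *: poly_app p T v.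
Proof.
rewrite !(@poly_app_widen _ _ _ (size p)) ?size_scale_leq // scaler_sumr.
by apply: eq_bigr => i _; rewrite coefZ scalerA.
Qed.

Lemma poly_app_sum n (P : 'I_n -> {poly F}) T v :
  poly_app (\sum_(i < n) P i) T v = \sum_(i < n) poly_app (P i) T v.
Proof. exact: (big_morph _ (fun p q => poly_appD p q T v) (poly_app0 T v)). Qed.

Lemma poly_appXn n T v : poly_app 'X^n T v = iter n T v.
Proof.
rewrite (@poly_app_widen _ _ _ n.+1) ?size_polyXn // big_ord_recr /= coefXn eqxx scale1r.
by rewrite big1 ?add0r // => i _; rewrite coefXn (ltn_eqF (ltn_ord i)) scale0r.
Qed.

Lemma poly_appXM p T v : poly_app ('X * p) T v = poly_app p T (T v).
Proof.
rewrite (@poly_app_widen _ _ _ (size p).+1); last first.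
  by apply: leq_trans (size_polyMleq _ _) _; rewrite size_polyX.
rewrite big_ord_recl coefXM /= scale0r add0r.
by apply: eq_bigr => i _; rewrite coefXM add0n -iterS iterSr.
Qed.

Lemma poly_appXnM n p T v : poly_app ('X^n * p) T v = poly_app p T (iter n T v).
Proof.
elim: n v => [|n IHn] v; first by rewrite expr0 mul1r.
by rewrite exprS -mulrA poly_appXM IHn iterSr.
Qed.

Lemma poly_app_dvdp p q T v :
  (forall w, poly_app p T w = 0) -> p %| q -> poly_app q T v = 0.
Proof.
move=> p_vanishes /dvdpP[s ->]; rewrite -[s]coefK poly_def mulr_suml poly_app_sum.
by rewrite big1 // => i _; rewrite -scalerAl poly_appZ poly_appXnM p_vanishes scaler0.
Qed.

Lemma eq_poly_app p T1 T2 v : T1 =1 T2 -> poly_app p T1 v = poly_app p T2 v.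
Proof. by move=> eqT; apply: eq_bigr => i _; rewrite (eq_iter eqT). Qed.

Lemma poly_app_comp_Xn p n T v : poly_app (p \Po 'X^n) T v = poly_app p (iter n T) v.
Proof.
rewrite comp_polyE poly_app_sum; apply: eq_bigr => i _.
by rewrite -exprM poly_appZ poly_appXn mulnC iterM.
Qed.

End PolyApp.

Lemma exists_comp_poly_dvdp (F : fieldType) (p r : {poly F}) :
  p != 0 -> exists2 Q : {poly F}, Q != 0 /\ (size Q <= size p)%N & p %| Q \Po r.
Proof.
move=> p_neq0; set n := size p; set d := n.-1.
have size_mod (q : {poly F}) : (size (q %% p)%R <= d)%N.
  by rewrite -ltnS prednK ?ltn_modp // size_poly_gt0.
pose A : 'M[F]_(n, d) := \matrix_i poly_rV (r ^+ i %% p).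
have: kermx A != 0.
  rewrite kermx_eq0 /row_free ltn_eqF //.
  by apply: leq_ltn_trans (rank_leq_col A) _; rewrite prednK // size_poly_gt0.
rewrite -nz_row_eq0; set u := nz_row _ => u_neq0.
have uA0 : u *m A = 0 by apply/sub_kermxP; apply: nz_row_sub.
have Q_comp : rVpoly u \Po r = \sum_(i < n) u 0 i *: r ^+ i.
  rewrite [in LHS](row_sum_delta u) linear_sum /=.
  rewrite (big_morph (comp_poly r) (fun a b => comp_polyD a b r) (comp_poly0 r)).
  by apply: eq_bigr => i _; rewrite linearZ /= rVpoly_delta comp_polyZ comp_Xn_poly.
exists (rVpoly u); first split; last 1 first.
- have: poly_rV ((rVpoly u \Po r) %% p) = u *m A :> 'rV_d.
    rewrite Q_comp (big_morph _ (@modpD _ p) (mod0p p)) linear_sum mulmx_sum_row.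
    by apply: eq_bigr => i _; rewrite modpZl linearZ rowK.
  by rewrite uA0 /dvdp => /(congr1 rVpoly); rewrite poly_rV_K // linear0 => ->.
- by apply: contra u_neq0 => /eqP Q0; rewrite -[u]rVpolyK Q0 linear0.
- exact: size_poly.
Qed.

Theorem mainTheorem17 (F : fieldType) (V : lmodType F) (T T1 : V -> V)
    (m k l : nat) (p : {poly F}) :
  vanishing_poly T p -> (size p).-1 = m ->
  (0 < l)%N -> (forall v : V, iter l T1 v = iter k T v) ->
  exists q : {poly F}, vanishing_poly T1 q /\ ((size q).-1 <= m * l)%N.
Proof.
move=> [p_neq0 p_vanishes] <- l_gt0 T1lTk.
have [Q [Q_neq0 size_Q] p_dvd_Q] := exists_comp_poly_dvdp 'X^k p_neq0.
have size_Xl : size ('X^l : {poly F}) = l.+1 by rewrite size_polyXn.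
exists (Q \Po 'X^l); split; first split.
- by rewrite comp_poly_eq0 ?size_Xl ?ltnS.
- move=> v; rewrite poly_app_comp_Xn (eq_poly_app _ _ T1lTk) -poly_app_comp_Xn.
  exact: poly_app_dvdp p_dvd_Q.
- by rewrite size_comp_poly size_Xl leq_mul2r -!subn1 leq_sub2r ?orbT.
Qed.
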